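(* It is undecidable whether, for an arbitrary ranked alphabet $\Sigma$, computable strong bimonoid $B$, and bottom-up deterministic $(\Sigma,B)$-wta $\mathcal{A}$, the Nerode $(\Sigma,B)$-algebra $\mathcal{N}(\mathcal{A})$ is finite.
   Context: Ranked alphabet $\Sigma$ ($\Sigma^{(0)}\ne\emptyset$), trees $T_\Sigma$. Strong bimonoid $(B,\oplus,\otimes,\mathbb{0},\mathbb{1})$: commutative monoid $(B,\oplus,\mathbb{0})$, monoid $(B,\otimes,\mathbb{1})$, $\mathbb{0}\ne\mathbb{1}$, $\mathbb{0}$ absorbing; computable if $B$ is recursive and $\oplus,\otimes$ are computable. $(\Sigma,B)$-wta $\mathcal{A}=(Q,\delta,F)$: $Q$ finite nonempty, $\delta_k:Q^k\times\Sigma^{(k)}\times Q\to B$, $F:Q\to B$; bottom-up deterministic if for all $k,\sigma,q_1,\dots,q_k$ at most one $q$ has $\delta_k(q_1\dots q_k,\sigma,q)\ne\mathbb{0}$. Vector algebra $\mathrm{V}(\mathcal{A})=(B^Q,\delta_{\mathcal{A}})$, $\delta_{\mathcal{A}}(\sigma)(v_1,\dots,v_k)_q=\bigoplus_{q_1,\dots,q_k}\big(\bigotimes_{i=1}^k(v_i)_{q_i}\big)\otimes\delta_k(q_1\dots q_k,\sigma,q)$. The Nerode algebra $\mathcal{N}(\mathcal{A})=(Q_{\mathcal{N}},\theta_{\mathcal{N}},F_{\mathcal{N}})$ has carrier $Q_{\mathcal{N}}$ the smallest subset of $B^Q$ closed under all $\delta_{\mathcal{A}}(\sigma)$ (equivalently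 the image of the unique homomorphism $T_\Sigma\to\mathrm{V}(\mathcal{A})$), restricted operations, and $(F_{\mathcal{N}})_v=\bigoplus_q v_q\otimes F_q$; it is finite if $Q_{\mathcal{N}}$ is finite. *)

From HB Require Import structures.
From mathcomp Require Import all_boot.
Set Implicit Arguments. Unset Strict Implicit. Unset Printing Implicit Defensive.

(* Cantor pairing and its inverse (enumeration of the diagonals). *)
Definition cpair (x y : nat) : nat := ((x + y) * (x + y).+1)./2 + y.
Definition unpair_step (p : nat * nat) : nat * nat :=
  if p.1 is x.+1 then (x, p.2.+1) else (p.2.+1, 0).
Definition unpair (n : nat) : nat * nat := iter n unpair_step (0, 0).

Inductive prog : Type :=
| PZero
| PSucc
| PId
| PFst
| PSnd
| PComp of prog & prog       (* PComp f g = f o g *)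
| PPair of prog & prog
| PRec of prog & prog
| PMu of prog.

Inductive evalR : prog -> nat -> nat -> Prop :=
| ev_zero x : evalR PZero x 0
| ev_succ x : evalR PSucc x x.+1
| ev_id x : evalR PId x x
| ev_fst x : evalR PFst x (unpair x).1
| ev_snd x : evalR PSnd x (unpair x).2
| ev_comp f g x y z : evalR g x y -> evalR f y z -> evalR (PComp f g) x z
| ev_pair f g x a b : evalR f x a -> evalR g x b -> evalR (PPair f g) x (cpair a b)
| ev_rec0 f g n x y : unpair n = (0, x) -> evalR f x y -> evalR (PRec f g) n y
| ev_recS f g n m x y z : unpair n = (m.+1, x) ->
    evalR (PRec f g) (cpair m x) y -> evalR g (cpair m (cpair y x)) z ->
    evalR (PRec f g) n z
| ev_mu f x n : evalR f (cpair n x) 0 ->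
    (forall i, i < n -> exists y, evalR f (cpair i x) y.+1) ->
    evalR (PMu f) x n.

Fixpoint prog_to_tree (p : prog) : GenTree.tree nat :=
  match p with
  | PZero => GenTree.Node 0 [::]
  | PSucc => GenTree.Node 1 [::]
  | PId => GenTree.Node 2 [::]
  | PFst => GenTree.Node 3 [::]
  | PSnd => GenTree.Node 4 [::]
  | PComp f g => GenTree.Node 5 [:: prog_to_tree f; prog_to_tree g]
  | PPair f g => GenTree.Node 6 [:: prog_to_tree f; prog_to_tree g]
  | PRec f g => GenTree.Node 7 [:: prog_to_tree f; prog_to_tree g]
  | PMu f => GenTree.Node 8 [:: prog_to_tree f]
  end.

Fixpoint tree_to_prog (t : GenTree.tree nat) : option prog :=
  match t with
  | GenTree.Node 0 [::] => Some PZero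
  | GenTree.Node 1 [::] => Some PSucc
  | GenTree.Node 2 [::] => Some PId
  | GenTree.Node 3 [::] => Some PFst
  | GenTree.Node 4 [::] => Some PSnd
  | GenTree.Node 5 [:: a; b] =>
      if (tree_to_prog a, tree_to_prog b) is (Some f, Some g)
      then Some (PComp f g) else None
  | GenTree.Node 6 [:: a; b] =>
      if (tree_to_prog a, tree_to_prog b) is (Some f, Some g)
      then Some (PPair f g) else None
  | GenTree.Node 7 [:: a; b] =>
      if (tree_to_prog a, tree_to_prog b) is (Some f, Some g)
      then Some (PRec f g) else None
  | GenTree.Node 8 [:: a] =>
      if tree_to_prog a is Some f then Some (PMu f) else None
  | _ => None
  end.

Lemma prog_treeK : pcancel prog_to_tree tree_to_prog.
Proof. by elim=> //= f -> // g ->. Qed.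

HB.instance Definition _ := Countable.copy prog (pcan_type prog_treeK).

(*  - ranked alphabet: symbols 0 .. size ranks - 1, symbol s has rank       *)
(*    nth 0 ranks s;                                                        *)
(*  - computable strong bimonoid: carrier B a subset of nat decided by      *)
(*    memP; oplus, otimes computed by addP, mulP on cpair x y; constants    *)
(*    zeroB, oneB;                                                          *)
(*  - wta: states 0 .. nQ - 1; transition weights listed in trans as        *)
(*    entries (q1..qk, sigma, q, weight), unlisted weights are zeroB;       *)
(*    final weights finw.                                                   *)

Record instance := Inst {
  ranks : seq nat;
  memP : prog; addP : prog; mulP : prog;
  zeroB : nat; oneB : nat;
  nQ : nat;
  trans : seq (seq nat * nat * nat * nat);
  finw : seq nat }.

Definition inst_to (I : instance) :=
  (ranks I, memP I, addP I, mulP I, zeroB I, oneB I, nQ I, trans I, finw I).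
Definition inst_of x :=
  let: (r, a, b, c, d, e, f, g, h) := x in Inst r a b c d e f g h.
Lemma instK : cancel inst_to inst_of. Proof. by case. Qed.
HB.instance Definition _ := Countable.copy instance (can_type instK).

Section Semantics.
Variables (I : instance) (add mul : nat -> nat -> nat).

Definition rank (s : nat) : nat := nth 0 (ranks I) s.

Definition delta (qs : seq nat) (s q : nat) : nat :=
  if [seq e.2 | e <- trans I & e.1 == (qs, s, q)] is w :: _ then w else zeroB I.

Fixpoint state_tuples (k : nat) : seq (seq nat) :=
  if k is k'.+1 then [seq q :: t | q <- iota 0 (nQ I), t <- state_tuples k']
  else [:: [::]].

(* vectors in B^Q are sequences of length nQ; the operation delta_A(s) *)
Definition deltaA (s : nat) (vs : seq (seq nat)) : seq nat :=
  [seq foldr add (zeroB I)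
       [seq mul (foldr mul (oneB I)
                  [seq nth (zeroB I) vq.1 vq.2 | vq <- zip vs qs])
                (delta qs s q)
       | qs <- state_tuples (size vs)]
  | q <- iota 0 (nQ I)].

Inductive nerode_carrier : seq nat -> Prop :=
| NC_step s vs : s < size (ranks I) -> size vs = rank s ->
    (forall v, v \in vs -> nerode_carrier v) -> nerode_carrier (deltaA s vs).

Definition nerode_finite : Prop :=
  exists l : seq (seq nat), forall v, nerode_carrier v -> v \in l.

End Semantics.

(* chi : characteristic function of B, add/mul : oplus/otimes, all three
   computed by the programs of the instance. *)
Definition valid_instance (I : instance) (chi : nat -> bool)
  (add mul : nat -> nat -> nat) : Prop :=
  let inB x := chi x in
  (* ranked alphabet with Sigma^(0) nonempty *)
  0 \in ranks I /\
  (* computable strong bimonoid (B = {n | chi n}) *)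
  (forall n, evalR (memP I) n (chi n)) /\
  (forall x y, inB x -> inB y ->
     evalR (addP I) (cpair x y) (add x y) /\ inB (add x y)) /\
  (forall x y, inB x -> inB y ->
     evalR (mulP I) (cpair x y) (mul x y) /\ inB (mul x y)) /\
  inB (zeroB I) /\ inB (oneB I) /\ zeroB I <> oneB I /\
  (forall x y z, inB x -> inB y -> inB z ->
     add x (add y z) = add (add x y) z) /\
  (forall x y, inB x -> inB y -> add x y = add y x) /\
  (forall x, inB x -> add x (zeroB I) = x) /\
  (forall x y z, inB x -> inB y -> inB z ->
     mul x (mul y z) = mul (mul x y) z) /\
  (forall x, inB x -> mul (oneB I) x = x /\ mul x (oneB I) = x) /\
  (forall x, inB x -> mul (zeroB I) x = zeroB I /\ mul x (zeroB I) = zeroB I) /\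
  0 < nQ I /\
  (forall qs s q w, (qs, s, q, w) \in trans I ->
     [/\ s < size (ranks I), size qs = rank I s,
         all (fun p => p < nQ I) qs, q < nQ I & inB w]) /\
  size (finw I) = nQ I /\ all inB (finw I) /\
  (forall qs s q q', q < nQ I -> q' < nQ I ->
     delta I qs s q <> zeroB I -> delta I qs s q' <> zeroB I -> q = q').

(* Diagonalization. Given a candidate decider [d], build a one-state wta over a
   nullary and a unary symbol whose Nerode algebra consists of 1 and the powers
   of a single weight [w]. The multiplication caps the exponents of [w] at the
   first search bound at which [d], run on the code of this very instance,
   answers "not finite". Hence the Nerode algebra is finite exactly when [d]
   answers "not finite", and [d] is wrong either way.
   Self-reference is avoided by storing a tag [t] inside [w]: the code of the
   instance is a computable function [diag_code] of [t], and equals it when [t]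
   is the code of the multiplication program itself. That program runs [d] on
   [diag_code t] with a bounded search, which is a total computable function
   ([clocked]). *)

From HB Require Import structures.
From mathcomp Require Import all_boot zify.
Set Implicit Arguments. Unset Strict Implicit. Unset Printing Implicit Defensive.

Lemma cpairE x y : cpair x y = 'C((x + y).+1, 2) + y.
Proof. by rewrite bin2 mulnC. Qed.

Lemma cpairSr x y : cpair x y.+1 = (cpair x.+1 y).+1.
Proof. by rewrite !cpairE addnS addSn addnS. Qed.

Lemma cpairS0 x : cpair x.+1 0 = (cpair 0 x).+1.
Proof. by rewrite !cpairE add0n !addn0 binS bin1 addnS. Qed.

Lemma cpairK x y : unpair (cpair x y) = (x, y).
Proof.
move Dn: (cpair x y) => n; elim: n x y Dn => [|n IHn] [|x] [|y] //;
  rewrite ?cpairS0 ?cpairSr // => -[Dn].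
all: by rewrite /unpair iterS -/(unpair n) (IHn _ _ Dn).
Qed.

Definition unpair1 z := (unpair z).1.
Definition unpair2 z := (unpair z).2.

Lemma unpair1K a b : unpair1 (cpair a b) = a.
Proof. by rewrite /unpair1 cpairK. Qed.

Lemma unpair2K a b : unpair2 (cpair a b) = b.
Proof. by rewrite /unpair2 cpairK. Qed.

(** * Evaluation with a bounded search *)

Fixpoint rec_opt (F G : nat -> option nat) (m x : nat) : option nat :=
  if m is k.+1 then
    if rec_opt F G k x is Some y then G (cpair k (cpair y x)) else None
  else F x.

(* [mu_scan F k] summarizes [F 0], ..., [F k.-1]: it is [j.+2] if [j] is the
   first zero and all earlier values are defined, [1] if an undefined value
   comes first, and [0] if all values are defined and positive. *)
Fixpoint mu_scan (F : nat -> option nat) (k : nat) : nat :=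
  if k is k'.+1 then
    if mu_scan F k' is 0 then
      match F k' with None => 1 | Some 0 => k'.+2 | Some _ => 0 end
    else mu_scan F k'
  else 0.

Fixpoint evalb (n : nat) (p : prog) (x : nat) {struct p} : option nat :=
  match p with
  | PZero => Some 0
  | PSucc => Some x.+1
  | PId => Some x
  | PFst => Some (unpair x).1
  | PSnd => Some (unpair x).2
  | PComp f g => if evalb n g x is Some y then evalb n f y else None
  | PPair f g =>
      if evalb n f x is Some a then
        if evalb n g x is Some b then Some (cpair a b) else None
      else None
  | PRec f g => rec_opt (evalb n f) (evalb n g) (unpair x).1 (unpair x).2
  | PMu f =>
      if mu_scan (fun i => evalb n f (cpair i x)) n is j.+2 then Some j else None
  end.

Lemma mu_scanP F k :
  (mu_scan F k = 0 -> forall i, i < k -> exists y, F i = Some y.+1) /\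
  (forall j, mu_scan F k = j.+2 ->
     F j = Some 0 /\ forall i, i < j -> exists y, F i = Some y.+1).
Proof.
elim: k => [|k [IH0 IH2]] /=; first by split=> // i.
case Ek: (mu_scan F k) => [|[|j']] //; last by split=> // j Ej; apply: IH2; rewrite Ek.
case EF: (F k) => [[|y]|]; split=> //.
  by move=> j [<-]; split=> //; apply: IH0.
by move=> _ i; rewrite ltnS leq_eqVlt => /predU1P [-> | /(IH0 Ek) //]; exists y.
Qed.

Lemma mu_scan_zero F k :
  (forall i, i < k -> exists y, F i = Some y.+1) -> mu_scan F k = 0.
Proof.
elim: k => [|k IHk] Fpos //=.
rewrite IHk => [|i lt_ik]; last exact/Fpos/ltnW.
by have [y ->] := Fpos k (ltnSn k).
Qed.

Lemma mu_scan_first F j k :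
  F j = Some 0 -> (forall i, i < j -> exists y, F i = Some y.+1) -> j < k ->
  mu_scan F k = j.+2.
Proof.
move=> Fj0 Fpos; elim: k => [|k IHk] //; rewrite ltnS leq_eqVlt /=.
by case/predU1P => [<- | /IHk ->] //; rewrite mu_scan_zero ?Fj0.
Qed.

Lemma evalb_sound n p x y : evalb n p x = Some y -> evalR p x y.
Proof.
elim: p x y => [||||| f IHf g IHg | f IHf g IHg | f IHf g IHg | f IHf] x y /=.
1-5: by case=> <-; constructor.
- by case Eg: (evalb n g x) => [y'|] // Ef; apply: ev_comp (IHg _ _ Eg) (IHf _ _ Ef).
- case Ef: (evalb n f x) => [a|] //; case Eg: (evalb n g x) => [b|] // [<-].
  exact: ev_pair (IHf _ _ Ef) (IHg _ _ Eg).
- have: unpair x = ((unpair x).1, (unpair x).2) by case: (unpair x).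
  move: (unpair x).1 (unpair x).2 => m x'.
  elim: m x y x' => [|m IHm] x y x' Ex /=; first by move/IHf; apply: ev_rec0 Ex.
  case Er: (rec_opt _ _ m x') => [y'|] // Eg.
  exact: ev_recS Ex (IHm _ _ _ (cpairK m x') Er) (IHg _ _ Eg).
- case Es: (mu_scan _ _) => [|[|j]] // [<-].
  have [Ef0 Efpos] := (mu_scanP (fun i => evalb n f (cpair i x)) n).2 _ Es.
  apply: ev_mu => [|i /Efpos [y' Ey']]; [exact: IHf Ef0 | exists y'; exact: IHf Ey'].
Qed.

Section EvalRNestedInd.
Variable P : prog -> nat -> nat -> Prop.
Hypothesis Pzero : forall x, P PZero x 0.
Hypothesis Psucc : forall x, P PSucc x x.+1.
Hypothesis Pid : forall x, P PId x x.
Hypothesis Pfst : forall x, P PFst x (unpair x).1.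
Hypothesis Psnd : forall x, P PSnd x (unpair x).2.
Hypothesis Pcomp : forall f g x y z,
  evalR g x y -> P g x y -> evalR f y z -> P f y z -> P (PComp f g) x z.
Hypothesis Ppair : forall f g x a b,
  evalR f x a -> P f x a -> evalR g x b -> P g x b -> P (PPair f g) x (cpair a b).
Hypothesis Prec0 : forall f g n x y,
  unpair n = (0, x) -> evalR f x y -> P f x y -> P (PRec f g) n y.
Hypothesis PrecS : forall f g n m x y z, unpair n = (m.+1, x) ->
  evalR (PRec f g) (cpair m x) y -> P (PRec f g) (cpair m x) y ->
  evalR g (cpair m (cpair y x)) z -> P g (cpair m (cpair y x)) z ->
  P (PRec f g) n z.
Hypothesis Pmu : forall f x n,
  evalR f (cpair n x) 0 -> P f (cpair n x) 0 ->
  (forall i, i < n -> exists y, evalR f (cpair i x) y.+1 /\ P f (cpair i x) y.+1) ->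
  P (PMu f) x n.

(* The generated [evalR_ind] gives no induction hypothesis for the premises
   of [ev_mu] hidden under the existential. *)
Fixpoint evalR_nested_ind p x y (H : evalR p x y) {struct H} : P p x y :=
  match H in evalR p x y return P p x y with
  | ev_zero x => Pzero x
  | ev_succ x => Psucc x
  | ev_id x => Pid x
  | ev_fst x => Pfst x
  | ev_snd x => Psnd x
  | ev_comp _ _ _ _ _ Hg Hf => Pcomp Hg (evalR_nested_ind Hg) Hf (evalR_nested_ind Hf)
  | ev_pair _ _ _ _ _ Hf Hg => Ppair Hf (evalR_nested_ind Hf) Hg (evalR_nested_ind Hg)
  | ev_rec0 _ g _ _ _ E Hf => Prec0 g E Hf (evalR_nested_ind Hf)
  | ev_recS _ _ _ _ _ _ _ E Hr Hg =>
      PrecS E Hr (evalR_nested_ind Hr) Hg (evalR_nested_ind Hg)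
  | ev_mu _ _ _ H0 Hpos => Pmu H0 (evalR_nested_ind H0)
      (fun i lt_in => let: ex_intro y Hy := Hpos i lt_in in
                      ex_intro _ y (conj Hy (evalR_nested_ind Hy)))
  end.

End EvalRNestedInd.

Definition eventually (P : nat -> Prop) := exists N, forall n, N <= n -> P n.

Lemma eventually_ge m : eventually (fun n => m <= n).
Proof. by exists m. Qed.

Lemma eventually_mono (P Q : nat -> Prop) :
  (forall n, P n -> Q n) -> eventually P -> eventually Q.
Proof. by move=> PQ [N HN]; exists N => n /HN /PQ. Qed.

Lemma eventually_and (P Q : nat -> Prop) :
  eventually P -> eventually Q -> eventually (fun n => P n /\ Q n).
Proof.
move=> [N1 H1] [N2 H2]; exists (maxn N1 N2) => n.
by rewrite geq_max => /andP [/H1 ? /H2 ?].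
Qed.

Lemma eventually_forall_ltn m (P : nat -> nat -> Prop) :
  (forall i, i < m -> eventually (P i)) ->
  eventually (fun n => forall i, i < m -> P i n).
Proof.
elim: m => [|m IHm] Pev; first by exists 0.
have [N HN] := eventually_and (IHm (fun i lt_im => Pev i (ltnW lt_im)))
                              (Pev m (ltnSn m)).
exists N => n /HN [Plt Pm] i; rewrite ltnS leq_eqVlt.
by case/predU1P => [-> | /Plt].
Qed.

Lemma evalb_complete p x y :
  evalR p x y -> eventually (fun n => evalb n p x = Some y).
Proof.
elim/evalR_nested_ind => {p x y} [||||| f g x y z _ Eg _ Ef | f g x a b _ Ef _ Eg
  | f g n x y Ex _ Ef | f g n m x y z Ex _ Er _ Eg | f x n _ Ef0 Efpos];
  try by exists 0.
- by apply: eventually_mono (eventually_and Eg Ef) => k /= [-> ->].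
- by apply: eventually_mono (eventually_and Ef Eg) => k /= [-> ->].
- by apply: eventually_mono Ef => k /=; rewrite Ex.
- apply: eventually_mono (eventually_and Er Eg) => k /= [+ Egk].
  by rewrite Ex cpairK /= => ->.
- have Epos : eventually (fun k =>
      forall i, i < n -> exists y, evalb k f (cpair i x) = Some y.+1).
    apply: eventually_forall_ltn => i /Efpos [y [_ Ey]].
    by apply: eventually_mono Ey => k Eyk; exists y.
  apply: eventually_mono (eventually_and (eventually_and Ef0 Epos)
                                         (eventually_ge n.+1)).
  move=> k [[Ek0 Ekpos] lt_nk] /=.
  by rewrite (@mu_scan_first (fun i => evalb k f (cpair i x)) n k).
Qed.

Lemma evalR_det p x y1 y2 : evalR p x y1 -> evalR p x y2 -> y1 = y2.
Proof.
move=> /evalb_complete E1 /evalb_complete E2.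
by have [N HN] := eventually_and E1 E2; case: (HN N (leqnn N)) => -> [].
Qed.

Definition computes (p : prog) (f : nat -> nat) := forall x, evalR p x (f x).

Fixpoint prim_rec (f g : nat -> nat) (m x : nat) : nat :=
  if m is k.+1 then g (cpair k (cpair (prim_rec f g k x) x)) else f x.

Section BasicPrograms.
Implicit Types (p q : prog) (f g : nat -> nat).

Lemma computes_ext p f g : computes p f -> f =1 g -> computes p g.
Proof. by move=> pf fg x; rewrite -fg; apply: pf. Qed.

Lemma computes_zero : computes PZero (fun=> 0). Proof. by move=> x; constructor. Qed.
Lemma computes_succ : computes PSucc succn. Proof. by move=> x; constructor. Qed.
Lemma computes_id : computes PId id. Proof. by move=> x; constructor. Qed.
Lemma computes_fst : computes PFst unpair1. Proof. by move=> x; constructor. Qed.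
Lemma computes_snd : computes PSnd unpair2. Proof. by move=> x; constructor. Qed.

Lemma computes_comp p q f g :
  computes p f -> computes q g -> computes (PComp p q) (f \o g).
Proof. by move=> pf qg x; apply: ev_comp (qg x) (pf _). Qed.

Lemma computes_pair p q f g :
  computes p f -> computes q g -> computes (PPair p q) (fun z => cpair (f z) (g z)).
Proof. by move=> pf qg x; apply: ev_pair (pf x) (qg x). Qed.

Lemma computes_rec p q f g : computes p f -> computes q g ->
  computes (PRec p q) (fun z => prim_rec f g (unpair1 z) (unpair2 z)).
Proof.
move=> pf qg z; have: unpair z = (unpair1 z, unpair2 z).
  by rewrite /unpair1 /unpair2; case: (unpair z).
move: (unpair1 z) (unpair2 z) => m x; elim: m z => [|m IHm] z Ez /=.
  exact: ev_rec0 Ez (pf x).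
exact: ev_recS Ez (IHm _ (cpairK m x)) (qg _).
Qed.

End BasicPrograms.

Definition PFstSnd := PComp PFst PSnd.
Definition PSndSnd := PComp PSnd PSnd.
Definition PPred := PComp (PRec PZero PFst) (PPair PId PZero).
Definition PAdd := PRec PId (PComp PSucc PFstSnd).
Definition PMul := PRec PZero (PComp PAdd (PPair PFstSnd PSndSnd)).
Definition PSubr := PRec PId (PComp PPred PFstSnd).
Definition PIfz := PRec PFst (PComp PSnd PSndSnd).

Definition pconst c := iter c (PComp PSucc) PZero.
Definition ppred A := PComp PPred A.
Definition padd A B := PComp PAdd (PPair A B).
Definition pmul A B := PComp PMul (PPair A B).
Definition psub A B := PComp PSubr (PPair B A).
Definition pifz C A B := PComp PIfz (PPair C (PPair A B)).
Definition pexp2 A :=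
  PComp (PComp (PRec (pconst 1) (pmul (pconst 2) PFstSnd)) (PPair PId PZero)) A.
Notation code2 x y := (CodeSeq.code [:: x; y]).
Definition pcode2 A B := pmul (pexp2 A) (PComp PSucc (padd (pexp2 B) (pexp2 B))).

Ltac simpl_unpair := repeat progress rewrite ?unpair1K ?unpair2K /=.

Section ArithmeticPrograms.
Implicit Types (A B C : prog) (a b c : nat -> nat).

Lemma computes_fst_snd : computes PFstSnd (fun z => unpair1 (unpair2 z)).
Proof. exact: computes_comp computes_fst computes_snd. Qed.

Lemma computes_snd_snd : computes PSndSnd (fun z => unpair2 (unpair2 z)).
Proof. exact: computes_comp computes_snd computes_snd. Qed.

Lemma computes_const n : computes (pconst n) (fun=> n).
Proof.
elim: n => [|n IHn] x; first exact: ev_zero.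
exact: ev_comp (IHn x) (ev_succ _).
Qed.

Lemma computes_pred A a : computes A a -> computes (ppred A) (fun z => (a z).-1).
Proof.
move=> Aa; apply: computes_comp Aa => x.
apply: computes_ext (computes_comp (computes_rec computes_zero computes_fst)
                                   (computes_pair computes_id computes_zero)) _ x.
by case=> [|z] /=; simpl_unpair.
Qed.

Lemma computes_add A B a b :
  computes A a -> computes B b -> computes (padd A B) (fun z => a z + b z).
Proof.
move=> Aa Bb; apply: computes_ext (computes_comp _ (computes_pair Aa Bb)) _.
  exact: computes_rec computes_id (computes_comp computes_succ computes_fst_snd).
move=> z /=; simpl_unpair; elim: (a z) => //= m ->; by simpl_unpair.
Qed.

Lemma computes_mul A B a b :
  computes A a -> computes B b -> computes (pmul A B) (fun z => a z * b z).
Proof.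
move=> Aa Bb; apply: computes_ext (computes_comp _ (computes_pair Aa Bb)) _.
  exact: computes_rec computes_zero (computes_add computes_fst_snd computes_snd_snd).
move=> z /=; simpl_unpair; elim: (a z) => //= m ->; simpl_unpair; lia.
Qed.

Lemma computes_sub A B a b :
  computes A a -> computes B b -> computes (psub A B) (fun z => a z - b z).
Proof.
move=> Aa Bb; apply: computes_ext (computes_comp _ (computes_pair Bb Aa)) _.
  exact: computes_rec computes_id (computes_pred computes_fst_snd).
move=> z /=; simpl_unpair; elim: (b z) => /= [|m ->]; simpl_unpair; lia.
Qed.

Lemma computes_ifz C A B c a b :
  computes C c -> computes A a -> computes B b ->
  computes (pifz C A B) (fun z => if c z is 0 then a z else b z).
Proof.
move=> Cc Aa Bb; apply: computes_ext
  (computes_comp _ (computes_pair Cc (computes_pair Aa Bb))) _.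
  exact: computes_rec computes_fst (computes_comp computes_snd computes_snd_snd).
by move=> z /=; simpl_unpair; case: (c z) => [|n] /=; simpl_unpair.
Qed.

Lemma computes_exp2 A a : computes A a -> computes (pexp2 A) (fun z => 2 ^ a z).
Proof.
move=> Aa; apply: computes_comp Aa => x.
apply: computes_ext (computes_comp (computes_rec (computes_const 1)
    (computes_mul (computes_const 2) computes_fst_snd))
  (computes_pair computes_id computes_zero)) _ x.
by move=> z /=; simpl_unpair; elim: z => //= z ->; simpl_unpair; rewrite expnS.
Qed.

Lemma computes_code2 A B a b : computes A a -> computes B b ->
  computes (pcode2 A B) (fun z => code2 (a z) (b z)).
Proof.
move=> Aa Bb; apply: computes_ext (computes_mul (computes_exp2 Aa)
  (computes_comp computes_succ (computes_add (computes_exp2 Bb) (computes_exp2 Bb)))) _.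
by move=> z /=; rewrite muln1 addnn.
Qed.

End ArithmeticPrograms.

Ltac compile := first
  [ match goal with H : computes ?p _ |- computes ?p _ => exact: H end
  | apply: computes_const | apply: computes_fst_snd | apply: computes_snd_snd
  | apply: computes_code2; compile
  | apply: computes_add; compile | apply: computes_mul; compile
  | apply: computes_sub; compile | apply: computes_ifz; compile
  | apply: computes_pred; compile | apply: computes_exp2; compile
  | apply: computes_zero | apply: computes_succ | apply: computes_id
  | apply: computes_fst | apply: computes_snd
  | apply: computes_comp; compile | apply: computes_pair; compile
  | apply: computes_rec; compile ].

Ltac solve_computes := apply: computes_ext; [compile | move=> z; simpl_unpair].

(** * A total program for bounded evaluation *)

Definition onat (o : option nat) : nat := if o is Some v then v.+1 else 0.

Fixpoint clocked (p : prog) : prog :=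
  match p with
  | PZero => pconst 1
  | PSucc => PComp PSucc (PComp PSucc PSnd)
  | PId => PComp PSucc PSnd
  | PFst => PComp PSucc PFstSnd
  | PSnd => PComp PSucc PSndSnd
  | PComp f g =>
      pifz (clocked g) (pconst 0) (PComp (clocked f) (PPair PFst (ppred (clocked g))))
  | PPair f g =>
      pifz (clocked f) (pconst 0) (pifz (clocked g) (pconst 0)
        (PComp PSucc (PPair (ppred (clocked f)) (ppred (clocked g)))))
  | PRec f g =>
      let step := PComp (clocked g)
        (PPair (PComp PFst PSndSnd)
               (PPair PFst (PPair (ppred PFstSnd) (PComp PSnd PSndSnd)))) in
      PComp (PRec (clocked f) (pifz PFstSnd (pconst 0) step))
            (PPair PFstSnd (PPair PFst PSndSnd))
  | PMu f =>
      let value := PComp (clocked f)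
        (PPair (PComp PFst PSndSnd) (PPair PFst (PComp PSnd PSndSnd))) in
      let step := pifz PFstSnd
        (pifz value (pconst 1)
           (pifz (ppred value) (PComp PSucc (PComp PSucc PFst)) (pconst 0)))
        PFstSnd in
      let scan := PComp (PRec PZero step) (PPair PFst (PPair PFst PSnd)) in
      pifz scan (pconst 0) (pifz (ppred scan) (pconst 0) (ppred scan))
  end.

Lemma prim_rec_mu_scan (F : nat -> option nat) (step : nat -> nat) y :
  (forall k s, step (cpair k (cpair s y)) =
     if s is 0 then match F k with None => 1 | Some 0 => k.+2 | Some _ => 0 end
     else s) ->
  forall k, prim_rec (fun=> 0) step k y = mu_scan F k.
Proof. by move=> stepE; elim=> //= k ->; rewrite stepE; case: (mu_scan F k). Qed.

Lemma computes_clocked p :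
  computes (clocked p) (fun z => onat (evalb (unpair1 z) p (unpair2 z))).
Proof.
elim: p => [||||| f IHf g IHg | f IHf g IHg | f IHf g IHg | f IHf] /=; solve_computes.
1-5: by [].
- by case: (evalb _ g _) => //= y; simpl_unpair.
- by case: (evalb _ f _) => //= a; case: (evalb _ g _).
- move: (unpair2 z) (unpair1 z) => x n; rewrite -/(unpair1 x) -/(unpair2 x).
  elim: (unpair1 x) => [|m IHm] /=; simpl_unpair => //.
  by rewrite IHm; case: (rec_opt _ _ m _) => //= y; simpl_unpair.
- move: (unpair2 z) (unpair1 z) => x n.
  rewrite (@prim_rec_mu_scan (fun i => evalb n f (cpair i x))) => [|k s].
    by case: (mu_scan _ n) => [|[|j]].
  by simpl_unpair; case: s => //; case: (evalb n f _) => //= [[|y]].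
Qed.

(** * The capped bimonoid *)

Section Cap.
Variable P : pred nat.

Fixpoint cap s := if s is s'.+1 then if P (cap s') then cap s' else s else 0.

Lemma capP s :
  [/\ cap s <= s, forall T, T < cap s -> ~~ P T & cap s < s -> P (cap s)].
Proof.
elim: s => [|s [le_cs min_c lt_cP]] /=; first by split.
case: ifP => [Pc | /negbT nPc]; first by split=> //; apply: leqW.
have cs : cap s = s.
  by apply/eqP; rewrite eqn_leq le_cs leqNgt; apply: contra nPc.
split=> [//|T|]; last by rewrite ltnn.
rewrite ltnS leq_eqVlt => /predU1P [-> | lt_Ts]; first by rewrite -cs.
by apply: min_c; rewrite cs.
Qed.

Lemma cap_eq s m : m <= s -> (forall T, T < m -> ~~ P T) -> (m < s -> P m) ->
  cap s = m.
Proof.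
move=> le_ms min_m lt_mP; have [le_cs min_c lt_cP] := capP s.
case: (ltngtP (cap s) m) => // [lt_cm | lt_mc].
  by have := min_m _ lt_cm; rewrite lt_cP ?(leq_trans lt_cm).
by have := min_c _ lt_mc; rewrite lt_mP ?(leq_trans lt_mc).
Qed.

Lemma cap_le_witness s m : P m -> cap s <= m.
Proof.
by move=> Pm; have [_ min_c _] := capP s; rewrite leqNgt; apply/negP => /min_c/negP.
Qed.

Lemma cap_id s : (forall T, T < s -> ~~ P T) -> cap s = s.
Proof. by move=> nP; apply: cap_eq; rewrite ?ltnn. Qed.

Lemma cap_capD a b : cap (cap a + b) = cap (a + b).
Proof.
have [le_ca min_c lt_cP] := capP a.
have [lt_ca | -> //] : cap a < a \/ cap a = a.
  by rewrite ltn_neqAle le_ca andbT; case: eqP; [right | left].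
have cap_capa s : cap a <= s -> cap s = cap a.
  by move=> le_cs; apply: cap_eq => // _; apply: lt_cP.
by rewrite !cap_capa ?leq_addr ?(leq_trans le_ca) ?leq_addr.
Qed.

End Cap.

Section CappedMonoid.
Variable Q : nat -> pred nat.

(* Besides [0] and [1], the code [(cpair t e).+2] stands for the [e]-th power
   of a generator [w_t]; exponents are capped at the least [T] with [Q t T], so
   [w_t] generates a finite monoid exactly when [Q t] holds somewhere. *)
Definition cmul (x y : nat) : nat :=
  match x, y with
  | 0, _ => 0
  | _, 0 => 0
  | 1, _ => y
  | _, 1 => x
  | p.+2, q.+2 =>
      if unpair1 p == unpair1 q then
        (cpair (unpair1 p) (cap (Q (unpair1 p)) (unpair2 p + unpair2 q))).+2
      else 0
  end.

Lemma cmul0x x : cmul 0 x = 0. Proof. by []. Qed.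
Lemma cmulx0 x : cmul x 0 = 0. Proof. by case: x => [|[]]. Qed.
Lemma cmul1x x : cmul 1 x = x. Proof. by case: x => [|[]]. Qed.
Lemma cmulx1 x : cmul x 1 = x. Proof. by case: x => [|[]]. Qed.

Lemma cmulE p q : cmul p.+2 q.+2 =
  if unpair1 p == unpair1 q then
    (cpair (unpair1 p) (cap (Q (unpair1 p)) (unpair2 p + unpair2 q))).+2
  else 0.
Proof. by []. Qed.

Lemma cmul_pow t e1 e2 :
  cmul (cpair t e1).+2 (cpair t e2).+2 = (cpair t (cap (Q t) (e1 + e2))).+2.
Proof. by rewrite cmulE !unpair1K !unpair2K eqxx. Qed.

Lemma cmulA x y z : cmul x (cmul y z) = cmul (cmul x y) z.
Proof.
case: x => [|[|x]]; rewrite ?cmul0x ?cmul1x //.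
case: y => [|[|y]]; rewrite ?cmul0x ?cmulx0 ?cmul1x ?cmulx1 //.
case: z => [|[|z]]; rewrite ?cmulx0 ?cmulx1 //.
rewrite [cmul y.+2 _]cmulE [cmul x.+2 y.+2]cmulE.
case: eqP => [eyz | nyz]; case: eqP => [exy | nxy]; rewrite ?cmulx0 //.
- rewrite !cmulE !unpair1K !unpair2K exy eyz eqxx.
  by rewrite [unpair2 x + _]addnC !cap_capD addnC addnA.
- by rewrite cmulE unpair1K; case: eqP.
- by rewrite cmulE unpair1K exy; case: eqP.
Qed.

End CappedMonoid.

Arguments cmul : simpl never.


(** * The diagonal instance *)

Definition pmax := padd PFst (psub PSnd PFst).

Lemma computes_max : computes pmax (fun z => maxn (unpair1 z) (unpair2 z)).
Proof. by solve_computes; rewrite maxnE. Qed.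

Definition diag_inst (K : prog) (t : nat) : instance :=
  Inst [:: 0; 1] (pconst 1) pmax K 0 1 1
       [:: ([::], 0, 0, 1); ([:: 0], 1, 0, (cpair t 1).+2)] [:: 1].

Lemma pickle_instE r m a k z o n tr f :
  pickle (Inst r m a k z o n tr f) =
  code2 (code2 (code2 (code2 (code2 (code2 (code2 (code2
    (pickle r) (pickle m)) (pickle a)) (pickle k)) z) o) n) (pickle tr)) (pickle f).
Proof. by []. Qed.

Lemma pickle_seq2 (T : countType) (x y : T) :
  pickle [:: x; y] = code2 (pickle x) (pickle y).
Proof. by []. Qed.

Lemma pickle_entry (qs : seq nat) (s q w : nat) :
  pickle (qs, s, q, w) = code2 (code2 (code2 (pickle qs) s) q) w.
Proof. by []. Qed.

Definition diag_code_def (t : nat) : nat :=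
  code2 (code2 (code2 (code2 (code2 (code2 (code2 (code2
    (pickle [:: 0; 1]) (pickle (pconst 1))) (pickle pmax)) t) 0) 1) 1)
    (code2 (code2 (code2 (code2 (pickle ([::] : seq nat)) 0) 0) 1)
           (code2 (code2 (code2 (pickle [:: 0]) 1) 0) (cpair t 1).+2)))
    (pickle [:: 1]).

(* Sealed: unfolding it would evaluate the huge unary codes of programs. *)
Fact diag_code_key : unit. Proof. by []. Qed.
Definition diag_code := locked_with diag_code_key diag_code_def.
Canonical diag_code_unlockable := [unlockable fun diag_code].

Lemma pickle_diag_inst K : pickle (diag_inst K (pickle K)) = diag_code (pickle K).
Proof.
rewrite unlock pickle_instE (@pickle_seq2 (seq nat * nat * nat * nat)%type).
by rewrite !pickle_entry.
Qed.

Definition pdiag_code : prog :=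
  pcode2 (pcode2 (pcode2 (pcode2 (pcode2 (pcode2 (pcode2 (pcode2
    (pconst (pickle [:: 0; 1])) (pconst (pickle (pconst 1)))) (pconst (pickle pmax)))
    PId) (pconst 0)) (pconst 1)) (pconst 1))
    (pcode2 (pcode2 (pcode2 (pcode2 (pconst (pickle ([::] : seq nat))) (pconst 0))
                            (pconst 0)) (pconst 1))
            (pcode2 (pcode2 (pcode2 (pconst (pickle [:: 0])) (pconst 1)) (pconst 0))
                    (PComp PSucc (PComp PSucc (PPair PId (pconst 1)))))))
    (pconst (pickle [:: 1])).

Lemma computes_diag_code : computes pdiag_code diag_code.
Proof. by rewrite unlock; apply: computes_ext; [compile | move=> t]. Qed.

Section DiagonalInstance.
Variables (Q : nat -> pred nat) (K : prog) (t : nat).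

Notation J := (diag_inst K t).
Notation mul := (cmul Q).

Lemma diag_inst_valid :
  computes K (fun z => mul (unpair1 z) (unpair2 z)) ->
  valid_instance J (fun=> true) maxn mul.
Proof.
move=> Kmul; rewrite /valid_instance.
split=> //; split=> [n | ]; first exact: computes_const.
split=> [x y _ _ | ].
  by have := computes_max (cpair x y); rewrite unpair1K unpair2K.
split=> [x y _ _ | ]; first by have := Kmul (cpair x y); rewrite unpair1K unpair2K.
do 3 split=> //; split=> [x y z _ _ _ | ]; first exact: maxnA.
split=> [x y _ _ | ]; first exact: maxnC.
split=> [x _ | ]; first exact: maxn0.
split=> [x y z _ _ _ | ]; first exact: cmulA.
split=> [x _ | ]; first by rewrite cmul1x cmulx1.
split=> [x _ | ]; first by rewrite cmulx0.
split=> //; split=> [qs s q w | ]; first by rewrite !inE => /orP [] /eqP [-> -> -> _].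
by do 2 split=> //; move=> qs s [|q] [|q'].
Qed.

Lemma diag_deltaA_nullary : deltaA J maxn mul 0 [::] = [:: 1].
Proof. by rewrite /deltaA /delta /=. Qed.

Lemma diag_deltaA_unary v :
  deltaA J maxn mul 1 [:: v] = [:: mul (nth 0 v 0) (cpair t 1).+2].
Proof. by rewrite /deltaA /delta /= cmulx1 maxn0. Qed.

Lemma diag_carrier_shape v : nerode_carrier J maxn mul v ->
  v = [:: 1] \/ exists2 e, v = [:: (cpair t e).+2] & e = 1 \/ exists s, e = cap (Q t) s.
Proof.
elim=> s vs lt_s size_vs _ IH; case: s lt_s size_vs => [|[|s]] // _.
  by case: vs {IH} => // _; left; apply: diag_deltaA_nullary.
case: vs IH => [|v0 [|]] // IH _; right; rewrite diag_deltaA_unary.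
case: (IH v0 (mem_head _ _)) => [-> | [e -> _]] /=.
  by exists 1; [rewrite cmul1x | left].
by exists (cap (Q t) (e + 1)); [rewrite cmul_pow | right; exists (e + 1)].
Qed.

Lemma diag_carrier_one : nerode_carrier J maxn mul [:: 1].
Proof. by rewrite -diag_deltaA_nullary; apply: NC_step. Qed.

Lemma diag_carrier_pow k : (forall T, T < k.+1 -> ~~ Q t T) ->
  nerode_carrier J maxn mul [:: (cpair t k.+1).+2].
Proof.
elim: k => [|k IHk] noQ.
  have -> : [:: (cpair t 1).+2] = deltaA J maxn mul 1 [:: [:: 1]].
    by rewrite diag_deltaA_unary cmul1x.
  by apply: NC_step => // v; rewrite inE => /eqP ->; apply: diag_carrier_one.
have -> : [:: (cpair t k.+2).+2] = deltaA J maxn mul 1 [:: [:: (cpair t k.+1).+2]].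
  by rewrite diag_deltaA_unary cmul_pow addn1 cap_id.
apply: NC_step => // v; rewrite inE => /eqP ->.
by apply: IHk => T lt_Tk; apply/noQ/ltnW.
Qed.

Lemma diag_inst_finite : nerode_finite J maxn mul <-> exists T, Q t T.
Proof.
split=> [[l carrier_l] | [m Qm]].
  pose M := \max_(v <- l) head 0 v.
  have [/existsP [T QT] | noQ] := boolP [exists T : 'I_M.+1, Q t T]; first by exists T.
  have /carrier_l l_pow : nerode_carrier J maxn mul [:: (cpair t M.+1).+2].
    apply: diag_carrier_pow => T lt_TM; apply: contra noQ => QT.
    by apply/existsP; exists (Ordinal lt_TM).
  by have := @leq_bigmax_seq _ l xpredT (head 0) _ l_pow isT; rewrite /= cpairE; lia.
exists ([:: 1] :: [seq [:: (cpair t e).+2] | e <- iota 0 (maxn 1 m).+1]).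
move=> v /diag_carrier_shape [-> | [e -> e_exp]]; first exact: mem_head.
rewrite in_cons (map_f (fun e => [:: (cpair t e).+2])) ?orbT // mem_iota ltnS.
case: e_exp => [-> | [s ->]]; first exact: leq_maxl.
exact: leq_trans (cap_le_witness s Qm) (leq_maxr _ _).
Qed.

End DiagonalInstance.

Section Diagonal.
Variable d : prog.

Definition diag_rejects (t T : nat) : bool := evalb T d (diag_code t) == Some 0.

Definition pcap : prog :=
  let answer := PComp (clocked d) (PPair PFstSnd (PComp pdiag_code PSndSnd)) in
  PComp (PRec PZero (pifz (ppred answer) (pifz answer (PComp PSucc PFst) PFstSnd)
                          (PComp PSucc PFst)))
        (PPair PSnd PFst).

Lemma computes_cap :
  computes pcap (fun z => cap (diag_rejects (unpair1 z)) (unpair2 z)).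
Proof.
have clocked_d := computes_clocked d; have diag_code_ok := computes_diag_code.
solve_computes; move: (unpair2 z) (unpair1 z) => s t.
elim: s => //= s IHs; simpl_unpair; rewrite IHs /diag_rejects.
by case: (evalb _ d _) => [[|v]|].
Qed.

Definition pcmul : prog :=
  let x' := ppred (ppred PFst) in let y' := ppred (ppred PSnd) in
  let tx := PComp PFst x' in let ty := PComp PFst y' in
  let ex := PComp PSnd x' in let ey := PComp PSnd y' in
  let pow :=
    PComp PSucc (PComp PSucc (PPair tx (PComp pcap (PPair tx (padd ex ey))))) in
  pifz PFst (pconst 0) (pifz PSnd (pconst 0) (pifz (ppred PFst) PSnd
    (pifz (ppred PSnd) PFst (pifz (padd (psub tx ty) (psub ty tx)) pow (pconst 0))))).

Lemma computes_cmul :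
  computes pcmul (fun z => cmul diag_rejects (unpair1 z) (unpair2 z)).
Proof.
have cap_ok := computes_cap.
solve_computes; case: (unpair1 z) (unpair2 z) => [|[|x]] [|[|y]] //.
rewrite cmulE /=; case: eqP => [-> | ne_xy]; first by rewrite subnn.
have : 0 < unpair1 x - unpair1 y + (unpair1 y - unpair1 x) by lia.
by case: (_ + _).
Qed.

End Diagonal.

Theorem theorem8p7 :
  ~ exists d : prog,
      forall (I : instance) (chi : nat -> bool) (add mul : nat -> nat -> nat),
        valid_instance I chi add mul ->
        exists b : bool, evalR d (pickle I) b /\ (b <-> nerode_finite I add mul).
Proof.
case=> d decide; pose K := pcmul d.
have [b [d_b finite_b]] :=
  decide _ _ _ _ (diag_inst_valid (pickle K) (computes_cmul d)).
rewrite pickle_diag_inst in d_b.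
have {}finite_b := iff_trans finite_b (diag_inst_finite _ _ _).
case: b d_b finite_b => d_b finite_b.
  have [T /eqP /evalb_sound d_0] := finite_b.1 isT.
  by have := evalR_det d_b d_0.
have [N evalb_N] := evalb_complete d_b.
suff: exists T, diag_rejects d (pickle K) T by move/finite_b.
by exists N; apply/eqP/evalb_N.
Qed.
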